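(* Let $1\le k\le n$ be integers, let $M\in\mathbb{R}^{2n\times 2n}$ be symmetric positive definite, let $N=\operatorname{diag}(\nu_1,\ldots,\nu_k)$ with $0<\nu_1<\cdots<\nu_k$, and let $\tilde N=\operatorname{diag}(N,N)$. Consider the problem of minimizing $f(X)=\operatorname{tr}(\tilde N X^TMX)$ over $X\in\mathbb{R}^{2n\times 2k}$ subject to $X^TJ_{2n}X=J_{2k}$. If $X_*$ is a critical point of this problem, then for every $K\in\mathbb{R}^{2k\times 2k}$ with $K^TJ_{2k}K=J_{2k}$ and $K^T\tilde N K=\tilde N$, the matrix $X_*K$ is also a critical point of this problem.
   Context: $J_{2m}=\begin{bmatrix}0 & I_m\\ -I_m & 0\end{bmatrix}$. A point $X_*\in\mathbb{R}^{2n\times 2k}$ is a critical point of the problem if $X_*^TJ_{2n}X_*=J_{2k}$ and there exists a skew-symmetric matrix $L_*\in\mathbb{R}^{2k\times 2k}$ (Lagrange multiplier) such that $MX_*\tilde N=J_{2n}X_*L_*$. *)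

From mathcomp Require Import all_boot all_order all_algebra.
From mathcomp Require Import reals.
Set Implicit Arguments. Unset Strict Implicit. Unset Printing Implicit Defensive.
Import Order.TTheory GRing.Theory Num.Theory.
Local Open Scope ring_scope.

Definition Jmx (R : ringType) (m : nat) : 'M[R]_(m + m) :=
  block_mx 0 1%:M (- 1%:M) 0.

Definition spd (R : realType) (p : nat) (M : 'M[R]_p) : Prop :=
  M^T = M /\ forall v : 'cV[R]_p, v != 0 -> 0 < (v^T *m M *m v) 0 0.

Definition Ntilde (R : ringType) (k : nat) (N : 'M[R]_k) : 'M[R]_(k + k) :=
  block_mx N 0 0 N.

Definition fobj (R : realType) (n k : nat) (M : 'M[R]_(n + n))
  (Nt : 'M[R]_(k + k)) (X : 'M[R]_(n + n, k + k)) : R :=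
  \tr (Nt *m X^T *m M *m X).

(* Critical point of min tr(Nt X^T M X) s.t. X^T J_{2n} X = J_{2k}:
   feasible and there is a skew-symmetric Lagrange multiplier L with
   M X Nt = J_{2n} X L. *)
Definition critical_point (R : realType) (n k : nat) (M : 'M[R]_(n + n))
  (Nt : 'M[R]_(k + k)) (X : 'M[R]_(n + n, k + k)) : Prop :=
  X^T *m Jmx R n *m X = Jmx R k /\
  exists L : 'M[R]_(k + k), L^T = - L /\ M *m X *m Nt = Jmx R n *m X *m L.

(* K commutes with J Ñ: writing Ñ = Kᵀ Ñ K and using K J Kᵀ = J (K is
   symplectic) gives K (J Ñ) = (K J Kᵀ) Ñ K = J Ñ K.  Since J Ñ J = -Ñ,
   K then commutes with (J Ñ)² = -Ñ², hence with Ñ itself, Ñ being diagonal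
   with positive entries.  Together with Kᵀ Ñ K = Ñ this makes K orthogonal,
   so XK is feasible with the skew-symmetric multiplier Kᵀ L K. *)

From mathcomp Require Import all_boot all_order all_algebra.
From mathcomp Require Import reals ring.
Import Order.TTheory GRing.Theory Num.Theory.
Local Open Scope ring_scope.

Lemma Jmx_sqr (R : nzRingType) m : Jmx R m *m Jmx R m = - 1%:M.
Proof.
rewrite /Jmx mulmx_block !mul0mx !mulmx0 !add0r !addr0 mul1mx mulmx1.
by apply/oppr_inj; rewrite opp_block_mx !opprK oppr0 -scalar_mx_block.
Qed.

Lemma Jmx_Ntilde_Jmx (R : nzRingType) m (N : 'M[R]_m) :
  Jmx R m *m Ntilde N *m Jmx R m = - Ntilde N.
Proof.
rewrite /Jmx /Ntilde !mulmx_block !mul0mx !mulmx0 !add0r !addr0 !mul0mx.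
by rewrite mul1mx mulmx1 mulmxN mulmx1 mulNmx mul1mx opp_block_mx oppr0.
Qed.

Lemma Ntilde_diag (R : nzRingType) m (d : 'rV[R]_m) :
  Ntilde (diag_mx d) = diag_mx (row_mx d d).
Proof. by rewrite diag_mx_row. Qed.

Lemma diag_mx_comm_sqr (R : numDomainType) p (d : 'rV[R]_p) (K : 'M[R]_p) :
  (forall i, 0 < d 0 i) ->
  diag_mx d *m diag_mx d *m K = K *m (diag_mx d *m diag_mx d) ->
  diag_mx d *m K = K *m diag_mx d.
Proof.
move=> d_gt0; rewrite mulmx_diag mul_diag_mx mul_mx_diag => /matrixP dd_comm.
apply/matrixP => i j; rewrite mul_diag_mx mul_mx_diag !mxE.
have := dd_comm i j; rewrite !mxE => ddK.
have : (d 0 i + d 0 j) * ((d 0 i - d 0 j) * K i j) = 0.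
  transitivity (d 0 i * d 0 i * K i j - K i j * (d 0 j * d 0 j)); first by ring.
  by rewrite ddK subrr.
move/eqP; rewrite mulf_eq0 gt_eqF ?addr_gt0 //= mulrBl subr_eq0 => /eqP ->.
exact: mulrC.
Qed.

Section Symplectic.

Variables (R : comUnitRingType) (m : nat) (K : 'M[R]_(m + m)).
Hypothesis K_sympl : K^T *m Jmx R m *m K = Jmx R m.

Lemma symplectic_trmx : K *m Jmx R m *m K^T = Jmx R m.
Proof.
have inv_K : K *m (Jmx R m *m K^T *m Jmx R m) = - 1%:M.
  apply/oppr_inj; rewrite -mulmxN opprK; apply: mulmx1C.
  by rewrite mulNmx -!mulmxA (mulmxA K^T) K_sympl Jmx_sqr opprK.
rewrite -[LHS]mulmx1 -[1%:M]opprK -Jmx_sqr mulmxN !mulmxA -mulNmx.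
by rewrite -(mulmxA K) -(mulmxA K) inv_K opprK mul1mx.
Qed.

Lemma symplectic_comm_Jmx_mul (A : 'M[R]_(m + m)) :
  K^T *m A *m K = A -> Jmx R m *m A *m K = K *m (Jmx R m *m A).
Proof. by move=> A_inv; rewrite -{2}A_inv !mulmxA symplectic_trmx. Qed.

Lemma Ntilde_sqr_comm (N : 'M[R]_m) :
  K^T *m Ntilde N *m K = Ntilde N ->
  Ntilde N *m Ntilde N *m K = K *m (Ntilde N *m Ntilde N).
Proof.
move=> /symplectic_comm_Jmx_mul JN_comm.
have JN_sqr :
    Jmx R m *m Ntilde N *m (Jmx R m *m Ntilde N) = - (Ntilde N *m Ntilde N).
  by rewrite mulmxA Jmx_Ntilde_Jmx mulNmx.
apply: oppr_inj; rewrite -mulNmx -JN_sqr -mulmxN -JN_sqr.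
by rewrite -[LHS]mulmxA JN_comm [LHS]mulmxA JN_comm !mulmxA.
Qed.

End Symplectic.

Lemma comm_preserving_orthogonal {R : comUnitRingType} {p} {D K : 'M[R]_p} :
  D \in unitmx -> K^T *m D *m K = D -> D *m K = K *m D -> K *m K^T = 1%:M.
Proof.
move=> D_unit K_pres DK_comm; apply: mulmx1C.
by apply: (can_inj (mulmxK D_unit)); rewrite mul1mx -mulmxA -DK_comm mulmxA.
Qed.

Lemma critical_point_mulmx {R : realType} {n k : nat} {M : 'M[R]_(n + n)}
    {Nt : 'M[R]_(k + k)} {X : 'M[R]_(n + n, k + k)} {K : 'M[R]_(k + k)} :
  critical_point M Nt X -> K^T *m Jmx R k *m K = Jmx R k ->
  K *m K^T = 1%:M -> Nt *m K = K *m Nt -> critical_point M Nt (X *m K).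
Proof.
move=> [X_feas [L [L_skew MX_eq]]] K_sympl K_orth NK_comm; split.
  by rewrite trmx_mul -[RHS]K_sympl -X_feas !mulmxA.
exists (K^T *m L *m K); split.
  by rewrite !trmx_mul trmxK L_skew mulNmx mulmxN mulmxA.
rewrite !mulmxA -(mulmxA _ K) -NK_comm mulmxA MX_eq -!mulmxA.
congr (_ *m (_ *m _)); by rewrite !mulmxA K_orth mul1mx.
Qed.

Theorem proposition3p3 (R : realType) (n k : nat) (hk1 : (1 <= k)%N)
  (hkn : (k <= n)%N) (M : 'M[R]_(n + n)) (nu : 'rV[R]_k)
  (hM : spd M)
  (hnu_pos : forall i : 'I_k, 0 < nu 0 i)
  (hnu_incr : forall i j : 'I_k, (i < j)%N -> nu 0 i < nu 0 j)
  (X : 'M[R]_(n + n, k + k))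
  (hX : critical_point M (Ntilde (diag_mx nu)) X) :
  forall K : 'M[R]_(k + k),
    K^T *m Jmx R k *m K = Jmx R k ->
    K^T *m Ntilde (diag_mx nu) *m K = Ntilde (diag_mx nu) ->
    critical_point M (Ntilde (diag_mx nu)) (X *m K).
Proof.
move=> K K_sympl K_pres.
have d_gt0 (i : 'I_(k + k)) : 0 < row_mx nu nu 0 i.
  by rewrite mxE; case: splitP => j _; apply: hnu_pos.
have D_unit : Ntilde (diag_mx nu) \in unitmx.
  rewrite Ntilde_diag unitmxE det_diag unitfE.
  by apply/prodf_neq0 => i _; rewrite gt_eqF.
have NK_comm : Ntilde (diag_mx nu) *m K = K *m Ntilde (diag_mx nu).
  rewrite Ntilde_diag; apply: diag_mx_comm_sqr d_gt0 _.
  by rewrite -Ntilde_diag; apply: Ntilde_sqr_comm.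
have K_orth := comm_preserving_orthogonal D_unit K_pres NK_comm.
exact: critical_point_mulmx hX K_sympl K_orth NK_comm.
Qed.
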